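(* Let $\omega$ be an almost monotone weight on $\mathbb N^2$, and for $j\in\mathbb N$ let $$X_j=(\mathbb D\times\cdots\times\mathbb D\times\overline{B(0,\rho_j)}\times\mathbb D\times\cdots)\times\mathbb D^\infty,$$ where $\overline{B(0,\rho_j)}$ is in the $j$-th coordinate of the first factor. Then $X_j\subset\Delta(\ell^1(\mathbb N^2,\omega))$ for every $j\in\mathbb N$.
   Context: $\mathbb D=\{|z|\le1\}$, $\mathbb D^\infty$ its countable product; $\overline{B(0,r)}=\{|z|\le r\}$; $p_1<p_2<\cdots$ are the primes. A weight on $\mathbb N^2$ (coordinatewise multiplication) is $\omega:\mathbb N^2\to[1,\infty)$ with $\omega(xy)\le\omega(x)\omega(y)$. It is admissible if $\lim_n\omega(l^n,k^n)^{1/n}=1$ for all $(l,k)$. It is almost monotone if either it is admissible, or there is $K>0$ such that $\omega(m_1,n_1)\le K\omega(m_2,n_2)$ whenever either $m_1\mid m_2$ or $n_1\mid n_2$. $\rho_j=\lim_n\omega(p_j^n,1)^{1/n}$. $\ell^1(\mathbb N^2,\omega)$ is the weighted Dirichlet-convolution algebra; its Gel'fand space is identified with the $\omega$-bounded semicharacters (nonzero multiplicative $\chi:\mathbb N^2\to\mathbb C$ with $|\chi|\le\omega$), each identified with the pair of sequences $((\chi(p_i,1))_i,(\chi(1,p_i))_i)$; thus a pair of sequences belongs to $\Delta$ iff the semicharacter it determines is $\omega$-bounded. *)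

From HB Require Import structures.
From mathcomp Require Import all_boot all_order all_algebra.
From mathcomp Require Import all_classical all_reals all_analysis.
From mathcomp Require Import complex.
Set Implicit Arguments. Unset Strict Implicit. Unset Printing Implicit Defensive.
Import Order.TTheory GRing.Theory Num.Theory.
Import numFieldNormedType.Exports.
Local Open Scope classical_set_scope.
Local Open Scope ring_scope.

Lemma next_prime_ex (m : nat) : exists p, ((m < p) && prime p)%N.
Proof. by case: (prime_above m) => p H1 H2; exists p; rewrite H1 H2. Qed.

Definition next_prime (m : nat) : nat := ex_minn (next_prime_ex m).

(* nth_prime i = p_{i+1}: the primes p_1 < p_2 < ... indexed from 0. *)
Fixpoint nth_prime (i : nat) : nat :=
  match i with
  | 0 => 2
  | i'.+1 => next_prime (nth_prime i')
  end.

(* A weight on N^2 (N = positive integers, coordinatewise multiplication). *)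
Definition is_weight (R : realType) (w : nat -> nat -> R) : Prop :=
  (forall m n, (0 < m)%N -> (0 < n)%N -> 1 <= w m n) /\
  (forall m1 n1 m2 n2, (0 < m1)%N -> (0 < n1)%N -> (0 < m2)%N -> (0 < n2)%N ->
     w (m1 * m2)%N (n1 * n2)%N <= w m1 n1 * w m2 n2).

Definition admissible (R : realType) (w : nat -> nat -> R) : Prop :=
  forall l k, (0 < l)%N -> (0 < k)%N ->
    (fun n : nat => w (l ^ n)%N (k ^ n)%N `^ (n%:R^-1)) @ \oo --> (1 : R).

Definition almost_monotone (R : realType) (w : nat -> nat -> R) : Prop :=
  admissible w \/
  exists K : R, 0 < K /\
    forall m1 n1 m2 n2, (0 < m1)%N -> (0 < n1)%N -> (0 < m2)%N -> (0 < n2)%N ->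
      ((m1 %| m2)%N \/ (n1 %| n2)%N) -> w m1 n1 <= K * w m2 n2.

Definition rho (R : realType) (w : nat -> nat -> R) (j : nat) : R :=
  limn (fun n : nat => w (nth_prime j ^ n)%N 1%N `^ (n%:R^-1)).

(* The semicharacter of N^2 determined by the pair of sequences (a, b):
   chi(m, n) = prod_i a_i^{v_{p_i}(m)} * prod_i b_i^{v_{p_i}(n)}.
   For m >= 1 only primes p_i with i < m can divide m (p_i > i). *)
Definition semichar (R : realType) (a b : nat -> R[i]) (m n : nat) : R[i] :=
  (\prod_(i < m) a i ^+ logn (nth_prime i) m) *
  (\prod_(i < n) b i ^+ logn (nth_prime i) n).

(* (a, b) belongs to the Gel'fand space Delta(l^1(N^2, w)):
   the determined semicharacter is w-bounded. *)
Definition in_Delta (R : realType) (w : nat -> nat -> R) (a b : nat -> R[i]) : Prop :=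
  forall m n, (0 < m)%N -> (0 < n)%N -> `|semichar a b m n| <= ((w m n)%:C)%C.

From HB Require Import structures.
From mathcomp Require Import all_boot all_order all_algebra.
From mathcomp Require Import all_classical all_reals all_analysis.
From mathcomp Require Import complex.
From mathcomp Require Import lra.
Import Order.TTheory GRing.Theory Num.Theory.
Local Open Scope ring_scope.
Set Implicit Arguments. Unset Strict Implicit.

(* All factors of the semicharacter have modulus at most 1 except the p_j-part,
   so |chi(m, n)| <= t^k with t = |a_j| <= rho_j and k = v_{p_j}(m); only t > 1
   matters.  Then rho_j > 1, so w is not admissible and is monotone with some
   constant K.  Since rho_j^M <= w(p_j^M, 1) (the roots only decrease along
   multiples of M), submultiplicativity gives, for every N,
     t^(kN) <= w(p_j^(kN), 1) <= K w(m^N, n^N) <= K w(m, n)^N,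
   and a bounded geometric sequence has ratio t^k / w(m, n) <= 1. *)

Lemma prime_next_prime m : prime (next_prime m).
Proof. by rewrite /next_prime; case: ex_minnP => p /andP []. Qed.

Lemma ltn_next_prime m : (m < next_prime m)%N.
Proof. by rewrite /next_prime; case: ex_minnP => p /andP []. Qed.

Lemma prime_nth_prime i : prime (nth_prime i).
Proof. by case: i => [|i] //=; exact: prime_next_prime. Qed.

Lemma nth_prime_gt0 i : (0 < nth_prime i)%N.
Proof. exact/prime_gt0/prime_nth_prime. Qed.

Lemma ltn_nth_prime i : (i < nth_prime i)%N.
Proof. by elim: i => [|i IH] //=; exact: leq_ltn_trans IH (ltn_next_prime _). Qed.

Section Weight.
Variables (R : realType) (w : nat -> nat -> R).
Hypothesis hw : is_weight w.

Lemma weight_ge1 m n : (0 < m)%N -> (0 < n)%N -> 1 <= w m n.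
Proof. exact: hw.1. Qed.

Lemma weight_ge0 m n : (0 < m)%N -> (0 < n)%N -> 0 <= w m n.
Proof. by move=> m0 n0; apply: le_trans ler01 (weight_ge1 m0 n0). Qed.

Lemma weight_expn_le m n N : (0 < m)%N -> (0 < n)%N -> (0 < N)%N ->
  w (m ^ N) (n ^ N) <= w m n ^+ N.
Proof.
move=> m0 n0; case: N => // N _; elim: N => [|N IH]; first by rewrite !expn1.
have mN : (0 < m ^ N.+1)%N by rewrite expn_gt0 m0.
have nN : (0 < n ^ N.+1)%N by rewrite expn_gt0 n0.
rewrite (expnS m) (expnS n) (exprS _ N.+1).
apply: le_trans (hw.2 _ _ _ _ m0 n0 mN nN) _.
by apply: ler_wpM2l; [exact: weight_ge0 | exact: IH].
Qed.

Let root_weight p M := w (p ^ M) 1 `^ M%:R^-1.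

Lemma root_weight_mulnl_le p M q : (0 < p)%N -> (0 < M)%N ->
  root_weight p (q.+1 * M) <= root_weight p M.
Proof.
move=> p0 M0; have pM : (0 < p ^ M)%N by rewrite expn_gt0 p0.
have := weight_expn_le pM (isT : (0 < 1)%N) (isT : (0 < q.+1)%N).
rewrite exp1n -expnM mulnC => hpow.
apply: le_trans (ge0_ler_powR _ _ _ hpow) _.
- by rewrite invr_ge0.
- by rewrite nnegrE weight_ge0 // expn_gt0 p0.
- by rewrite nnegrE exprn_ge0 // weight_ge0.
rewrite -powR_mulrn ?weight_ge0 // -powRrM natrM invfM mulrA mulfV //.
by rewrite mul1r.
Qed.

Lemma rho_le_root_weight j M : (0 < M)%N -> rho w j <= root_weight (nth_prime j) M.
Proof.
move=> M0; rewrite /rho -/(root_weight _ _).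
case: (pselect (cvgn (root_weight (nth_prime j)))) => [cvg_root|]; last first.
  (* the limit of a divergent sequence is the junk value 0 *)
  by move/dvgP => ->; rewrite powR_ge0.
rewrite leNgt; apply/negP => /(cvgr_gt _ cvg_root) [N _ /(_ (N.+1 * M)%N)] /=.
rewrite (leq_trans (leqnSn N)) ?leq_pmulr //.
by move/(_ isT); rewrite ltNge root_weight_mulnl_le ?nth_prime_gt0.
Qed.

Lemma expn_le_weight_of_le_rho j M (t : R) : 0 <= t -> t <= rho w j ->
  t ^+ M <= w (nth_prime j ^ M) 1.
Proof.
move=> t0 trho; case: (posnP M) => [->|M0]; first exact: weight_ge1.
have pM : (0 < nth_prime j ^ M)%N by rewrite expn_gt0 nth_prime_gt0.
apply: le_trans (_ : root_weight (nth_prime j) M ^+ M <= _).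
  rewrite lerXn2r ?nnegrE ?powR_ge0 //.
  exact: le_trans trho (rho_le_root_weight j M0).
rewrite /root_weight -powR_mulrn ?powR_ge0 // -powRrM mulVf ?powRr1 ?weight_ge0 //.
by rewrite pnatr_eq0 -lt0n.
Qed.

End Weight.

Lemma rho_admissible (R : realType) (w : nat -> nat -> R) j :
  admissible w -> rho w j = 1.
Proof.
move=> adm; have := adm _ _ (nth_prime_gt0 j) (isT : (0 < 1)%N).
under eq_fun do rewrite exp1n.
by move=> cvg1; rewrite /rho (cvg_lim _ cvg1).
Qed.

Lemma bernoulli_ineq (R : realDomainType) (x : R) n :
  0 <= x -> 1 + n%:R * x <= (1 + x) ^+ n.
Proof.
move=> x0; elim: n => [|n IH]; first by rewrite mul0r addr0 expr0.
have nx0 : 0 <= n%:R * x by rewrite mulr_ge0.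
rewrite exprS -natr1; nra.
Qed.

Lemma le1_of_bounded_powers (R : archiRealFieldType) (x K : R) :
  (forall N, x ^+ N.+1 <= K) -> x <= 1.
Proof.
move=> bounded; rewrite leNgt; apply/negP => x_gt1.
have r0 : 0 < x - 1 by rewrite subr_gt0.
pose N := Num.Def.archi_bound (`|K| / (x - 1)).
have KN : `|K| < N%:R * (x - 1).
  by rewrite -ltr_pdivrMr // archi_boundP // divr_ge0 // ltW.
have := bernoulli_ineq N.+1 (ltW r0); rewrite addrCA subrr addr0.
move=> /le_trans/(_ (bounded N)); rewrite -natr1 mulrDl mul1r.
by move=> /le_trans/(_ (ler_norm K)); lra.
Qed.

Lemma expn_le_weight_of_monotone (R : realType) (w : nat -> nat -> R) (K : R)
  (hw : is_weight w) (K0 : 0 <= K)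
  (hmono : forall m1 n1 m2 n2, (0 < m1)%N -> (0 < n1)%N -> (0 < m2)%N -> (0 < n2)%N ->
     ((m1 %| m2)%N \/ (n1 %| n2)%N) -> w m1 n1 <= K * w m2 n2)
  j m n k (t : R) : (0 < m)%N -> (0 < n)%N -> (nth_prime j ^ k %| m)%N ->
  0 <= t -> t <= rho w j -> t ^+ k <= w m n.
Proof.
move=> m0 n0 dvd_m t0 trho.
have W0 : 0 < w m n by apply: lt_le_trans (weight_ge1 hw m0 n0).
suff : t ^+ k / w m n <= 1 by rewrite ler_pdivrMr // mul1r.
apply: (@le1_of_bounded_powers _ _ K) => N.
have mN : (0 < m ^ N.+1)%N by rewrite expn_gt0 m0.
have nN : (0 < n ^ N.+1)%N by rewrite expn_gt0 n0.
have dvd_mN : (nth_prime j ^ (k * N.+1) %| m ^ N.+1)%N by rewrite expnM dvdn_exp2r.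
rewrite expr_div_n ler_pdivrMr ?exprn_gt0 // -exprM.
apply: le_trans (expn_le_weight_of_le_rho hw _ t0 trho) _.
have pkN : (0 < nth_prime j ^ (k * N.+1))%N by rewrite expn_gt0 nth_prime_gt0.
apply: le_trans (hmono _ _ _ _ pkN (isT : (0 < 1)%N) mN nN (or_introl dvd_mN)) _.
by apply: ler_wpM2l => //; exact: weight_expn_le.
Qed.

Lemma expn_logn_le_weight (R : realType) (w : nat -> nat -> R)
  (hw : is_weight w) (ham : almost_monotone w) j m n (t : R) :
  (0 < m)%N -> (0 < n)%N -> 0 <= t -> t <= rho w j ->
  t ^+ logn (nth_prime j) m <= w m n.
Proof.
move=> m0 n0 t0 trho; case: (leP t 1) => [t_le1 | t_gt1].
  exact: le_trans (exprn_ile1 _ t0 t_le1) (weight_ge1 hw m0 n0).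
case: ham => [adm | [K [K0 hmono]]].
  by move: trho; rewrite rho_admissible // leNgt t_gt1.
exact: (expn_le_weight_of_monotone hw (ltW K0) hmono m0 n0 (pfactor_dvdnn _ m) t0 trho).
Qed.

Lemma norm_prod_expr_le (C : numDomainType) (I : finType) (F : I -> C) (e : I -> nat)
  (j : I) (t : C) : (forall i, i != j -> `|F i| <= 1) -> `|F j| <= t ->
  `|\prod_i F i ^+ e i| <= t ^+ e j.
Proof.
move=> F_le1 Fj_le; have t0 : 0 <= t := le_trans (normr_ge0 _) Fj_le.
rewrite (bigD1 j) //= normrM normrX -[leRHS]mulr1.
apply: ler_pM => //; first by rewrite lerXn2r.
rewrite normr_prod; apply: prodr_ile1 => i /F_le1 Fi_le1.
by rewrite normr_ge0 normrX exprn_ile1.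
Qed.

Lemma norm_prod_expr_le1 (C : numDomainType) (I : finType) (F : I -> C) (e : I -> nat) :
  (forall i, `|F i| <= 1) -> `|\prod_i F i ^+ e i| <= 1.
Proof.
move=> F_le1; rewrite normr_prod; apply: prodr_ile1 => i _.
by rewrite normr_ge0 normrX exprn_ile1.
Qed.

Lemma norm_semichar_le (R : realType) (a b : nat -> R[i]) j m n :
  (forall i, i != j -> `|a i| <= 1) -> (forall i, `|b i| <= 1) ->
  `|semichar a b m n| <= `|a j| ^+ logn (nth_prime j) m.
Proof.
move=> a_le1 b_le1; rewrite /semichar normrM -[leRHS]mulr1.
apply: ler_pM => //; last exact: norm_prod_expr_le1.
case: (ltnP j m) => [jm | mj].
  apply: (@norm_prod_expr_le _ _ _ _ (Ordinal jm)) => // i i_neq_j; apply: a_le1.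
  by apply: contra i_neq_j => /eqP i_eq_j; apply/eqP/val_inj.
rewrite ltn_log0 ?(leq_ltn_trans mj (ltn_nth_prime j)) // expr0.
apply: norm_prod_expr_le1 => i; apply: a_le1.
by rewrite neq_ltn (leq_trans (ltn_ord i) mj).
Qed.

Unset Implicit Arguments.

Theorem mainTheorem8 (R : realType) (w : nat -> nat -> R)
  (hw : is_weight w) (ham : almost_monotone w) (j : nat)
  (a b : nat -> R[i])
  (ha : forall i, i != j -> `|a i| <= 1)
  (haj : `|a j| <= ((rho w j)%:C)%C)
  (hb : forall i, `|b i| <= 1) :
  in_Delta w a b.
Proof.
move=> m n m0 n0; apply: le_trans (norm_semichar_le m n ha hb) _.
have [t t0 aj_t] : exists2 t : R, 0 <= t & `|a j| = (t%:C)%C.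
  by rewrite normc_def; eexists; [apply: sqrtr_ge0 | reflexivity].
rewrite aj_t lecR in haj; rewrite aj_t -rmorphXn lecR.
exact: expn_logn_le_weight.
Qed.
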